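(* Let $\mathcal A=(a_{ij})$, $\mathcal B=(b_{ij})$ be symmetric $3\times3$ matrices (indices $0,1,2$), $\mathbf V(s,t)=(s^2,st,t^2)^T$, $\mathbf f(u)=(\mathcal A\mathbf V(u,1))\times(\mathcal B\mathbf V(u,1))$, and consider the symmetric QRT map $u_{n+1}=\frac{f^{(1)}(u_n)-u_{n-1}f^{(2)}(u_n)}{f^{(2)}(u_n)-u_{n-1}f^{(3)}(u_n)}$ with first integral $$J=\frac{\mathbf V(u_{n-1},1)^T\mathcal A\,\mathbf V(u_n,1)}{\mathbf V(u_{n-1},1)^T\mathcal B\,\mathbf V(u_n,1)}.$$ Write $u_n=p_n/q_n$ where $p_n,q_n$ satisfy $$p_{n+1}=\frac{q_{n-1}F^{(1)}_n-p_{n-1}F^{(2)}_n}{D_n},\qquad q_{n+1}=\frac{q_{n-1}F^{(2)}_n-p_{n-1}F^{(3)}_n}{D_n},$$ with $F^{(i)}_n=q_n^4f^{(i)}(p_n/q_n)$ and $D_n=\mathbf V(p_{n-1},q_{n-1})^T\mathcal B\,\mathbf V(p_n,q_n)$. Set $$a_1=a_{00}-Jb_{00},\ a_2=a_{01}-Jb_{01},\ a_3=a_{02}-Jb_{02},\ a_5=a_{12}-Jb_{12},\ a_6=a_{22}-Jb_{22},\ I=-a_{11}+Jb_{11},$$ $$\alpha=a_2a_5+a_3^2-a_1a_6+a_3I,\quad \beta=(a_1a_5-2a_2a_3)a_5+a_2^2a_6+(a_1a_6-a_3^2)I,\quad \gamma=4a_3+I,$$ and $A=-(\alpha^3+\alpha\beta\gamma+\beta^2)$,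 $B=(\beta^2-A)\alpha^2$, $C=A(A-\beta^2)$. Then $x_n=p_n$ and $x_n=q_n$ both satisfy $$x_{n+7}x_n=Ax_{n+6}x_{n+1}+Bx_{n+5}x_{n+2}+Cx_{n+4}x_{n+3}.$$
   Context: The superscripts in $f^{(i)},F^{(i)}_n$ denote the components of the vectors $\mathbf f$ and $\mathbf F_n$ (cross product of vectors in three dimensions). *)

From mathcomp Require Import all_boot all_order all_algebra.
Set Implicit Arguments. Unset Strict Implicit. Unset Printing Implicit Defensive.
Import GRing.Theory Num.Theory.
Local Open Scope ring_scope.

Section QRT.
Variable R : numFieldType.

Definition cmp (x : 'cV[R]_3) (k : nat) : R := x (inord k) 0.
Definition ent (M : 'M[R]_3) (i j : nat) : R := M (inord i) (inord j).

Definition Vq (s t : R) : 'cV[R]_3 :=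
  \col_(i < 3) (if (i == 0 :> nat) then s ^+ 2
                else if (i == 1 :> nat) then s * t else t ^+ 2).

Definition cross3 (x y : 'cV[R]_3) : 'cV[R]_3 :=
  \col_(i < 3) (if (i == 0 :> nat) then cmp x 1 * cmp y 2 - cmp x 2 * cmp y 1
                else if (i == 1 :> nat) then cmp x 2 * cmp y 0 - cmp x 0 * cmp y 2
                else cmp x 0 * cmp y 1 - cmp x 1 * cmp y 0).

Definition bform (M : 'M[R]_3) (x y : 'cV[R]_3) : R := (x^T *m M *m y) 0 0.

(* F_n = q_n^4 f(p_n/q_n) = (A V(p_n,q_n)) x (B V(p_n,q_n))  (homogenized) *)
Definition Fvec (A B : 'M[R]_3) (p q : R) : 'cV[R]_3 :=
  cross3 (A *m Vq p q) (B *m Vq p q).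

Definition Dn (B : 'M[R]_3) (p' q' p q : R) : R := bform B (Vq p' q') (Vq p q).

Definition Jval (A B : 'M[R]_3) (p' q' p q : R) : R :=
  bform A (Vq p' q') (Vq p q) / bform B (Vq p' q') (Vq p q).

Section Coefs.
Variables (A B : 'M[R]_3) (J : R).
Definition a1 := ent A 0 0 - J * ent B 0 0.
Definition a2 := ent A 0 1 - J * ent B 0 1.
Definition a3 := ent A 0 2 - J * ent B 0 2.
Definition a5 := ent A 1 2 - J * ent B 1 2.
Definition a6 := ent A 2 2 - J * ent B 2 2.
Definition Ic := - ent A 1 1 + J * ent B 1 1.
Definition alpha := a2 * a5 + a3 ^+ 2 - a1 * a6 + a3 * Ic.
Definition beta := (a1 * a5 - 2%:R * a2 * a3) * a5 + a2 ^+ 2 * a6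
                   + (a1 * a6 - a3 ^+ 2) * Ic.
Definition gamma := 4%:R * a3 + Ic.
Definition Acoef := - (alpha ^+ 3 + alpha * beta * gamma + beta ^+ 2).
Definition Bcoef := (beta ^+ 2 - Acoef) * alpha ^+ 2.
Definition Ccoef := Acoef * (Acoef - beta ^+ 2).
End Coefs.

Definition somos7 (Ac Bc Cc : R) (x : nat -> R) : Prop :=
  forall n, x (n + 7)%N * x n = Ac * x (n + 6)%N * x (n + 1)%N
                               + Bc * x (n + 5)%N * x (n + 2)%N
                               + Cc * x (n + 4)%N * x (n + 3)%N.
End QRT.

From mathcomp Require Import all_boot all_order all_algebra ring.
Set Implicit Arguments. Unset Strict Implicit. Unset Printing Implicit Defensive.
Import GRing.Theory Num.Theory.
Local Open Scope ring_scope.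

(* Write x_n = (p_n, q_n) and x ⊙ y for the coefficient vector of the binary
   quadratic form (p_x X + q_x Y)(p_y X + q_y Y).  Since J is conserved, x_{n-1}
   and x_{n+1} are the two roots of u |-> V(u)^T (A - J B) V(x_n), and the
   normalisation by D_n makes Vieta's formula exact: 2 x_{n+1} ⊙ x_{n-1} = L (x_n ⊙ x_n)
   for a fixed 3x3 matrix L.  Multiplying two such relations as quartic forms and
   cancelling a nonzero quadratic factor (binary forms form a domain) gives, for
   d = 3, ..., 7, relations 2 x_{c+d} ⊙ x_c = P_d(L) (x_{c+k} ⊙ x_{c+d-k}),
   k = floor(d/2), with P_d of degree at most 2 in L: odd steps use that consecutive
   points lie on the biquadratic curve, even steps the polarisation identity for
   products of values at squares.  As P_7 = A P_5 + B P_3 + C P_1, the relations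
   for d = 7, 5, 3, 1 at c = n, n+1, n+2, n+3 share the middle product
   x_{n+3} ⊙ x_{n+4}, hence
     x_{n+7} ⊙ x_n = A x_{n+6} ⊙ x_{n+1} + B x_{n+5} ⊙ x_{n+2} + C x_{n+4} ⊙ x_{n+3},
   whose X^2 and Y^2 coefficients are the Somos-7 relations for p and q. *)

Section Forms.
Variable R : comRingType.

(* [Vec3 a b c] is the binary quadratic form a X^2 + b XY + c Y^2 (or a coefficient
   triple), [Vec5] a binary quartic form; [mat3] acts on quadratic forms. *)
Record vec3 := Vec3 { v0 : R; v1 : R; v2 : R }.
Record vec5 := Vec5 { w0 : R; w1 : R; w2 : R; w3 : R; w4 : R }.
Record mat3 := Mat3 { r0 : vec3; r1 : vec3; r2 : vec3 }.
Record gram := Gram { g00 : vec5; g01 : vec5; g02 : vec5; g11 : vec5; g12 : vec5; g22 : vec5 }.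

Lemma vec3_ext (u v : vec3) : v0 u = v0 v -> v1 u = v1 v -> v2 u = v2 v -> u = v.
Proof. by case: u v => ? ? ? [? ? ?] /= -> -> ->. Qed.

Lemma vec5_ext (a b : vec5) :
  w0 a = w0 b -> w1 a = w1 b -> w2 a = w2 b -> w3 a = w3 b -> w4 a = w4 b -> a = b.
Proof. by case: a b => ? ? ? ? ? [? ? ? ? ?] /= -> -> -> -> ->. Qed.

Definition lprod (y z : R * R) : vec3 :=
  Vec3 (y.1 * z.1) (y.1 * z.2 + y.2 * z.1) (y.2 * z.2).

Definition fmul (u v : vec3) : vec5 :=
  Vec5 (v0 u * v0 v) (v0 u * v1 v + v1 u * v0 v) (v0 u * v2 v + v1 u * v1 v + v2 u * v0 v)
       (v1 u * v2 v + v2 u * v1 v) (v2 u * v2 v).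

Definition vscale (c : R) (u : vec3) := Vec3 (c * v0 u) (c * v1 u) (c * v2 u).
Definition vcomb (c u v w : vec3) :=
  Vec3 (v0 c * v0 u + v1 c * v0 v + v2 c * v0 w) (v0 c * v1 u + v1 c * v1 v + v2 c * v1 w)
       (v0 c * v2 u + v1 c * v2 v + v2 c * v2 w).
Definition wscale (c : R) (a : vec5) :=
  Vec5 (c * w0 a) (c * w1 a) (c * w2 a) (c * w3 a) (c * w4 a).
Definition wadd (a b : vec5) :=
  Vec5 (w0 a + w0 b) (w1 a + w1 b) (w2 a + w2 b) (w3 a + w3 b) (w4 a + w4 b).

Definition vdot (u v : vec3) := v0 u * v0 v + v1 u * v1 v + v2 u * v2 v.
Definition mxapp (M : mat3) (v : vec3) := Vec3 (vdot (r0 M) v) (vdot (r1 M) v) (vdot (r2 M) v).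
Definition mid := Mat3 (Vec3 1 0 0) (Vec3 0 1 0) (Vec3 0 0 1).
Definition mmul (M N : mat3) :=
  let rowmul u := vcomb u (r0 N) (r1 N) (r2 N) in
  Mat3 (rowmul (r0 M)) (rowmul (r1 M)) (rowmul (r2 M)).
Definition mcomb (c : vec3) (M0 M1 M2 : mat3) :=
  Mat3 (vcomb c (r0 M0) (r0 M1) (r0 M2)) (vcomb c (r1 M0) (r1 M1) (r1 M2))
       (vcomb c (r2 M0) (r2 M1) (r2 M2)).

Definition gcomb (c00 c01 c02 c11 c12 c22 : R) (G : gram) :=
  wadd (wscale c00 (g00 G)) (wadd (wscale c01 (g01 G)) (wadd (wscale c02 (g02 G))
    (wadd (wscale c11 (g11 G)) (wadd (wscale c12 (g12 G)) (wscale c22 (g22 G)))))).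

Definition expand_prod (f g : vec3) :=
  gcomb (v0 f * v0 g) (v0 f * v1 g + v1 f * v0 g) (v0 f * v2 g + v2 f * v0 g)
        (v1 f * v1 g) (v1 f * v2 g + v2 f * v1 g) (v2 f * v2 g).
Definition expand_cross (e : vec3) :=
  gcomb (v0 e ^+ 2) (v0 e * v1 e) (v0 e * v2 e) (v1 e ^+ 2) (v1 e * v2 e) (v2 e ^+ 2).
Definition expand_sq (e : vec3) :=
  gcomb (v0 e ^+ 2) (2 * v0 e * v1 e) (2 * v0 e * v2 e) (v1 e ^+ 2) (2 * v1 e * v2 e) (v2 e ^+ 2).

(* [polar x y (lprod z w) = vdot x (lprod z z) * vdot y (lprod w w)
                         + vdot x (lprod w w) * vdot y (lprod z z)]:
   the symmetrised product of the values at two squares only depends on their product. *)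
Definition polar (x y S : vec3) : R :=
  2 * v0 S ^+ 2 * (v0 x * v0 y) + 2 * v0 S * v1 S * (v0 x * v1 y + v1 x * v0 y)
  + (v1 S ^+ 2 - 2 * v0 S * v2 S) * (v0 x * v2 y + v2 x * v0 y)
  + 8 * v0 S * v2 S * (v1 x * v1 y) + 2 * v1 S * v2 S * (v1 x * v2 y + v2 x * v1 y)
  + 2 * v2 S ^+ 2 * (v2 x * v2 y).
Definition Polar (M N : mat3) (S : vec3) : vec5 :=
  Vec5 (polar (r0 M) (r0 N) S) (polar (r0 M) (r1 N) S + polar (r1 M) (r0 N) S)
       (polar (r0 M) (r2 N) S + polar (r1 M) (r1 N) S + polar (r2 M) (r0 N) S)
       (polar (r1 M) (r2 N) S + polar (r2 M) (r1 N) S) (polar (r2 M) (r2 N) S).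
Definition gram_of (u v w : vec3) :=
  Gram (fmul u u) (fmul u v) (fmul u w) (fmul v v) (fmul v w) (fmul w w).
Definition cross_gram (u v w u' v' w' : vec3) :=
  Gram (fmul u u') (wadd (fmul u v') (fmul v u')) (wadd (fmul u w') (fmul w u'))
       (fmul v v') (wadd (fmul v w') (fmul w v')) (fmul w w').
Definition polar_gram (M0 M1 M2 : mat3) (S : vec3) :=
  Gram (Polar M0 M0 S) (Polar M0 M1 S) (Polar M0 M2 S)
       (Polar M1 M1 S) (Polar M1 M2 S) (Polar M2 M2 S).

End Forms.

Ltac unfold_forms :=
  cbv [lprod fmul vscale vcomb wscale wadd vdot mxapp mid mmul mcomb gcomb expand_prod
       expand_cross expand_sq Polar polar polar_gram gram_of cross_gram v0 v1 v2 w0 w1 w2 w3 w4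
       r0 r1 r2 g00 g01 g02 g11 g12 g22].
Ltac vec3_ring := apply: vec3_ext; unfold_forms; ring.
Ltac vec5_ring := apply: vec5_ext; unfold_forms; ring.
Ltac destruct_vec3 := repeat match goal with v : vec3 _ |- _ => case: v => ? ? ? end.
Ltac destruct_vec5 := repeat match goal with a : vec5 _ |- _ => case: a => ? ? ? ? ? end.
Ltac destruct_mat3 :=
  repeat match goal with M : mat3 _ |- _ => case: M => [[? ? ?] [? ? ?] [? ? ?]] end.
Ltac destruct_gram :=
  repeat match goal with G : gram _ |- _ =>
    case: G => [[? ? ? ? ?] [? ? ? ? ?] [? ? ? ? ?] [? ? ? ? ?] [? ? ? ? ?] [? ? ? ? ?]] end.

Section FormAlgebra.
Variable R : comRingType.
Implicit Types (c d : R) (y z : R * R) (u v w e f g S : vec3 R) (a : vec5 R) (M N : mat3 R).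

Lemma gram_ext (G H : gram R) : g00 G = g00 H -> g01 G = g01 H -> g02 G = g02 H ->
  g11 G = g11 H -> g12 G = g12 H -> g22 G = g22 H -> G = H.
Proof. by case: G H => ? ? ? ? ? ? [? ? ? ? ? ?] /= -> -> -> -> -> ->. Qed.

Lemma lprodC y z : lprod y z = lprod z y.
Proof. vec3_ring. Qed.

Lemma fmul_lprodAC y z y' z' : fmul (lprod y z) (lprod y' z') = fmul (lprod y z') (lprod y' z).
Proof. vec5_ring. Qed.

Lemma fmul_vscale c d u v : fmul (vscale c u) (vscale d v) = wscale (c * d) (fmul u v).
Proof. destruct_vec3; vec5_ring. Qed.

Lemma wscaleA c d a : wscale c (wscale d a) = wscale (c * d) a.
Proof. case: a => *; vec5_ring. Qed.

Lemma vscale_vcomb c e u v w :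
  vscale c (vcomb e u v w) = vcomb e (vscale c u) (vscale c v) (vscale c w).
Proof. destruct_vec3; vec3_ring. Qed.

Lemma mxapp_mcomb e M0 M1 M2 v :
  mxapp (mcomb e M0 M1 M2) v = vcomb e (mxapp M0 v) (mxapp M1 v) (mxapp M2 v).
Proof. destruct_mat3; destruct_vec3; vec3_ring. Qed.

Lemma fmul_vcomb f g u v w :
  fmul (vcomb f u v w) (vcomb g u v w) = expand_prod f g (gram_of u v w).
Proof. destruct_vec3; vec5_ring. Qed.

Lemma fmul_vcomb_cross e u v w u' v' w' :
  fmul (vcomb e u v w) (vcomb e u' v' w') = expand_cross e (cross_gram u v w u' v' w').
Proof. destruct_vec3; vec5_ring. Qed.

Lemma Polar_lprod M y z :
  wscale 2 (fmul (mxapp M (lprod y y)) (mxapp M (lprod z z))) = Polar M M (lprod y z).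
Proof. destruct_mat3; vec5_ring. Qed.

Lemma Polar_vscale M N S : Polar M N (vscale 2 S) = wscale 4 (Polar M N S).
Proof. destruct_mat3; destruct_vec3; vec5_ring. Qed.

Lemma Polar_mcomb e M0 M1 M2 S :
  Polar (mcomb e M0 M1 M2) (mcomb e M0 M1 M2) S = expand_sq e (polar_gram M0 M1 M2 S).
Proof. destruct_mat3; destruct_vec3; vec5_ring. Qed.

End FormAlgebra.

Section FormDomain.
Variable R : idomainType.

(* Dehomogenisation [X = 1, Y = 'X], faithful on forms of a fixed degree. *)
Definition poly2 (u : vec3 R) : {poly R} := Poly [:: v0 u; v1 u; v2 u].
Definition poly4 (a : vec5 R) : {poly R} := Poly [:: w0 a; w1 a; w2 a; w3 a; w4 a].

Lemma poly4_fmul u v : poly4 (fmul u v) = poly2 u * poly2 v.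
Proof. by rewrite /poly4 /poly2 /= !cons_poly_def; ring. Qed.

Lemma poly2_inj : injective poly2.
Proof.
move=> u v E; apply: vec3_ext; [move/(congr1 (coefp 0)): E | move/(congr1 (coefp 1)): E
  | move/(congr1 (coefp 2)): E]; by rewrite /= !coef_Poly.
Qed.

Lemma fmul_cancel u v g : poly2 g != 0 -> fmul u g = fmul v g -> u = v.
Proof. by move=> g_neq0 /(congr1 poly4); rewrite !poly4_fmul => /(mulIf g_neq0)/poly2_inj. Qed.

Lemma wscale_inj (c : R) : c != 0 -> injective (wscale c).
Proof.
by move=> c_neq0 a b [] /(mulfI c_neq0) ? /(mulfI c_neq0) ? /(mulfI c_neq0) ?
  /(mulfI c_neq0) ? /(mulfI c_neq0) ?; apply: vec5_ext.
Qed.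

Lemma vscale_inj (c : R) : c != 0 -> injective (vscale c).
Proof.
by move=> c_neq0 u v [] /(mulfI c_neq0) ? /(mulfI c_neq0) ? /(mulfI c_neq0) ?; apply: vec3_ext.
Qed.

Lemma linpoly_neq0 (y : R * R) : y != (0, 0) -> Poly [:: y.1; y.2] != 0.
Proof.
case: y => a b; apply: contraNneq => /polyP E; move: (E 0%N) (E 1%N).
by rewrite !coef_Poly !coef0 /= => -> ->.
Qed.

Lemma poly2_vscale_lprod c y z :
  poly2 (vscale c (lprod y z)) = c%:P * (Poly [:: y.1; y.2] * Poly [:: z.1; z.2]).
Proof. by rewrite /poly2 /= !cons_poly_def; ring. Qed.

Lemma vscale_lprod_neq0 c y z :
  c != 0 -> y != (0, 0) -> z != (0, 0) -> poly2 (vscale c (lprod y z)) != 0.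
Proof.
by move=> c0 y0 z0; rewrite poly2_vscale_lprod !mulf_neq0 ?polyC_eq0 ?linpoly_neq0.
Qed.

End FormDomain.

Section GapCoefficients.
Variables (R : comRingType) (al be ga : R).

(* For points with [biquad y z = 0], [odd_gram] rewrites the cross products of the
   images of [z ⊙ z] and [y ⊙ y] under 1, L, L^2 in terms of the products of the images
   of [y ⊙ z] and of one cross product [C] ([Lcross_odd_gram]); [even_gram] does the
   same for the polarised products at [L (y ⊙ y)] ([Lpolar_even_gram]). *)
Definition odd_gram (G : gram R) (C : vec5 R) : gram R :=
  Gram (g00 G) C
    (gcomb (- (8 * al)) (- (4 * ga)) (- 2) (- 2) 0 0 G)
    (gcomb (- (4 * al)) (- (2 * ga)) (- 2) 0 0 0 G)
    (wadd (gcomb (8 * al * ga) (4 * ga ^+ 2 + 8 * al) (4 * ga) (2 * ga) 2 0 G)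
          (wscale (- (4 * al)) C))
    (wadd (gcomb (16 * al ^+ 2 - 4 * al * ga ^+ 2) (- (2 * ga ^+ 3) - 4 * be + 4 * al * ga)
                 (8 * al - 2 * ga ^+ 2) (4 * al - ga ^+ 2) 0 1 G)
          (wscale (2 * be + 2 * al * ga) C)).

Definition even_gram (G : gram R) (D : vec5 R) : gram R :=
  Gram (wscale 2 (g11 G)) D
    (gcomb (- (32 * al ^+ 2)) (- (8 * be) - 16 * al * ga) (- (16 * al)) (- (8 * al))
           (- (2 * ga)) (- 2) G)
    (gcomb (- (32 * al ^+ 2)) (- (16 * be) - 16 * al * ga) (- (16 * al)) 0 0 0 G)
    (wadd (gcomb (32 * al ^+ 2 * ga) (16 * be * ga + 16 * al * ga ^+ 2) (8 * be + 16 * al * ga)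
                 0 0 0 G)
          (wscale (- (4 * al)) D))
    (wadd (gcomb (8 * (4 * be ^+ 2 - 4 * al ^+ 2 * ga ^+ 2 + 16 * al ^+ 3))
                 (8 * (- (2 * be * ga ^+ 2) - 2 * al * ga ^+ 3 + 8 * al ^+ 2 * ga))
                 (8 * (- (2 * be * ga) - 2 * al * ga ^+ 2 + 8 * al ^+ 2)) (32 * al ^+ 2)
                 (8 * (al * ga - be)) (8 * al) G)
          (wscale (4 * (be + al * ga)) D)).

(* The polynomials P_d of the header, in the basis 1, L, L^2. *)
Definition gap_coef (d : nat) : vec3 R :=
  match d with
  | 0 | 1 => Vec3 2 0 0
  | 2 => Vec3 0 1 0
  | 3 => Vec3 (- (2 * al)) (- ga) (- 1)
  | 4 => Vec3 (- (2 * al ^+ 2)) (- (be + al * ga)) (- al)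
  | 5 => Vec3 (2 * (be ^+ 2 - al ^+ 3)) (- (2 * al * be + al ^+ 2 * ga)) (- al ^+ 2)
  | 6 => Vec3 (- (2 * (be ^+ 3 + al * be ^+ 2 * ga + 2 * al ^+ 3 * be))) (al ^+ 4)
              (- (al ^+ 2 * be))
  | 7 => Vec3 (2 * (be ^+ 4 + 2 * al * be ^+ 3 * ga + al ^+ 2 * be ^+ 2 * ga ^+ 2
                    + al ^+ 3 * be ^+ 2 + 2 * al ^+ 4 * be * ga + al ^+ 6))
              (2 * al * be ^+ 3 + al ^+ 2 * be ^+ 2 * ga + 2 * al ^+ 4 * be)
              (- (al ^+ 2 * be ^+ 2))
  | _ => Vec3 0 0 0
  end.

Definition somosA := - (al ^+ 3 + al * be * ga + be ^+ 2).
Definition somosB := (be ^+ 2 - somosA) * al ^+ 2.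
Definition somosC := somosA * (somosA - be ^+ 2).

Ltac gram_ring := rewrite /odd_gram /even_gram /gap_coef; destruct_gram; destruct_vec5; vec5_ring.

Lemma expand_gap3 G C :
  expand_prod (gap_coef 3) (gap_coef 1) G = expand_cross (gap_coef 2) (odd_gram G C).
Proof. gram_ring. Qed.

Lemma expand_gap5 G C :
  expand_prod (gap_coef 5) (gap_coef 3) G = expand_cross (gap_coef 4) (odd_gram G C).
Proof. gram_ring. Qed.

Lemma expand_gap7 G C :
  expand_prod (gap_coef 7) (gap_coef 5) G = expand_cross (gap_coef 6) (odd_gram G C).
Proof. gram_ring. Qed.

Lemma expand_gap4 G D :
  wscale 8 (expand_prod (gap_coef 4) (gap_coef 0) G) = expand_sq (gap_coef 2) (even_gram G D).
Proof. gram_ring. Qed.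

Lemma expand_gap6 G D :
  wscale 8 (expand_prod (gap_coef 6) (gap_coef 2) G) = expand_sq (gap_coef 4) (even_gram G D).
Proof. gram_ring. Qed.

Lemma gap_coef7_somos :
  gap_coef 7 = vcomb (Vec3 somosA somosB somosC) (gap_coef 5) (gap_coef 3) (gap_coef 1).
Proof. rewrite /somosC /somosB /somosA /gap_coef; vec3_ring. Qed.

End GapCoefficients.

Section QRTLinearisation.
Variables (R : comRingType) (a1 a2 a3 a5 a6 I : R).
Implicit Types (y z : R * R) (e v : vec3 R).

Definition biquad y z :=
  a1 * y.1 ^+ 2 * z.1 ^+ 2 + a2 * (y.1 ^+ 2 * z.1 * z.2 + y.1 * y.2 * z.1 ^+ 2)
  + a3 * (y.1 ^+ 2 * z.2 ^+ 2 + y.2 ^+ 2 * z.1 ^+ 2) - I * y.1 * y.2 * z.1 * z.2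
  + a5 * (y.1 * y.2 * z.2 ^+ 2 + y.2 ^+ 2 * z.1 * z.2) + a6 * y.2 ^+ 2 * z.2 ^+ 2.

Lemma biquadC y z : biquad y z = biquad z y.
Proof. rewrite /biquad; ring. Qed.

Definition qalpha := a2 * a5 + a3 ^+ 2 - a1 * a6 + a3 * I.
Definition qbeta := (a1 * a5 - 2 * a2 * a3) * a5 + a2 ^+ 2 * a6 + (a1 * a6 - a3 ^+ 2) * I.
Definition qgamma := 4 * a3 + I.

(* Vieta in the coordinates of [lprod]: if [biquad u z = a u1^2 + b u1 u2 + c u2^2],
   then [mxapp Lmx (lprod z z) = -2 (c, -b, a)], a multiple of [lprod y w] for the two
   roots [y], [w] of [biquad _ z]. *)
Definition Lmx : mat3 R :=
  Mat3 (Vec3 (- (2 * a3)) (- a5) (- (2 * a6))) (Vec3 (2 * a2) (- I) (2 * a5))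
       (Vec3 (- (2 * a1)) (- a2) (- (2 * a3))).
Definition Lpow (i : nat) : mat3 R :=
  match i with 0 => mid R | 1 => Lmx | _ => mmul Lmx Lmx end.
Definition Lpoly e := mcomb e (Lpow 0) (Lpow 1) (Lpow 2).

Definition Lgram v := gram_of (mxapp (Lpow 0) v) (mxapp (Lpow 1) v) (mxapp (Lpow 2) v).
Definition Lcross u v :=
  cross_gram (mxapp (Lpow 0) u) (mxapp (Lpow 1) u) (mxapp (Lpow 2) u)
             (mxapp (Lpow 0) v) (mxapp (Lpow 1) v) (mxapp (Lpow 2) v).
Definition Lpolar v := polar_gram (Lpow 0) (Lpow 1) (Lpow 2) (mxapp Lmx v).

Ltac unfold_L := cbv [Lmx Lpow Lpoly Lgram Lcross Lpolar biquad qalpha qbeta qgamma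
  odd_gram even_gram gap_coef].
Ltac L_ring := unfold_L; unfold_forms; ring.

Lemma mxapp_Lpoly_gap0 al be ga v : mxapp (Lpoly (gap_coef al be ga 0)) v = vscale 2 v.
Proof. case: v => *; apply: vec3_ext; L_ring. Qed.

Lemma mxapp_Lpoly_gap1 al be ga v : mxapp (Lpoly (gap_coef al be ga 1)) v = vscale 2 v.
Proof. exact: mxapp_Lpoly_gap0. Qed.

Lemma mxapp_Lpoly_gap2 al be ga v : mxapp (Lpoly (gap_coef al be ga 2)) v = mxapp Lmx v.
Proof. case: v => *; apply: vec3_ext; L_ring. Qed.

Lemma mxapp_Lpoly_vcomb c e f g v :
  mxapp (Lpoly (vcomb c e f g)) v =
  vcomb c (mxapp (Lpoly e) v) (mxapp (Lpoly f) v) (mxapp (Lpoly g) v).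
Proof. destruct_vec3; apply: vec3_ext; L_ring. Qed.

Lemma Lpolar_even_gram y :
  Lpolar (lprod y y) =
  even_gram qalpha qbeta qgamma (Lgram (lprod y y)) (g01 (Lpolar (lprod y y))).
Proof. by apply: gram_ext => //; apply: vec5_ext; L_ring. Qed.

Section OddRelations.
Variables y z : R * R.
Hypothesis biquad0 : biquad y z = 0.

Ltac by_biquad h := apply/eqP; rewrite -subr_eq0; apply/eqP;
  transitivity (h * biquad y z); [L_ring | by rewrite biquad0 mulr0].

Local Notation G :=
  (odd_gram qalpha qbeta qgamma (Lgram (lprod y z)) (g01 (Lcross (lprod z z) (lprod y y)))).

Lemma Lcross_biquad11 : g11 (Lcross (lprod z z) (lprod y y)) = g11 G.
Proof.
apply: vec5_ext.
- by_biquad (4 * a6).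
- by_biquad (- (8 * a5)).
- by_biquad (- (4 * I) + 8 * a3).
- by_biquad (- (8 * a2)).
- by_biquad (4 * a1).
Qed.

Lemma Lcross_biquad02 : g02 (Lcross (lprod z z) (lprod y y)) = g02 G.
Proof.
apply: vec5_ext.
- by_biquad (8 * a6).
- by_biquad (- (16 * a5)).
- by_biquad (- (8 * I) + 16 * a3).
- by_biquad (- (16 * a2)).
- by_biquad (8 * a1).
Qed.

Lemma Lcross_biquad12 : g12 (Lcross (lprod z z) (lprod y y)) = g12 G.
Proof.
apply: vec5_ext.
- by_biquad (- (8 * I * a6) - 32 * a3 * a6).
- by_biquad (16 * I * a5 + 64 * a3 * a5).
- by_biquad (16 * I * a3 + 8 * I ^+ 2 - 64 * a3 ^+ 2).
- by_biquad (16 * I * a2 + 64 * a2 * a3).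
- by_biquad (- (8 * I * a1) - 32 * a1 * a3).
Qed.

Lemma Lcross_biquad22 : g22 (Lcross (lprod z z) (lprod y y)) = g22 G.
Proof.
apply: vec5_ext.
- by_biquad (16 * I * a3 * a6 + 4 * I ^+ 2 * a6 + 16 * a1 * a6 ^+ 2 - 16 * a2 * a5 * a6
             + 48 * a3 ^+ 2 * a6).
- by_biquad (- (32 * I * a3 * a5) - 8 * I ^+ 2 * a5 - 32 * a1 * a5 * a6 + 32 * a2 * a5 ^+ 2
             - 96 * a3 ^+ 2 * a5).
- by_biquad (- (16 * I * a1 * a6) + 16 * I * a2 * a5 - 16 * I * a3 ^+ 2 - 8 * I ^+ 2 * a3
             - 4 * I ^+ 3 + 32 * a1 * a3 * a6 - 32 * a2 * a3 * a5 + 96 * a3 ^+ 3).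
- by_biquad (- (32 * I * a2 * a3) - 8 * I ^+ 2 * a2 - 32 * a1 * a2 * a6 - 96 * a2 * a3 ^+ 2
             + 32 * a2 ^+ 2 * a5).
- by_biquad (16 * I * a1 * a3 + 4 * I ^+ 2 * a1 - 16 * a1 * a2 * a5 + 48 * a1 * a3 ^+ 2
             + 16 * a1 ^+ 2 * a6).
Qed.

Lemma Lcross_odd_gram : Lcross (lprod z z) (lprod y y) = G.
Proof.
apply: gram_ext => //.
- by apply: vec5_ext; L_ring.
- exact: Lcross_biquad02.
- exact: Lcross_biquad11.
- exact: Lcross_biquad12.
- exact: Lcross_biquad22.
Qed.

End OddRelations.
End QRTLinearisation.

Section Steps.
Variables (R : idomainType) (a1 a2 a3 a5 a6 I : R).
Hypothesis two_neq0 : 2 != 0 :> R.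
Implicit Types (y z w : R * R) (e f g : vec3 R).

Local Notation L := (Lmx a1 a2 a3 a5 a6 I).
Local Notation Lpoly := (Lpoly a1 a2 a3 a5 a6 I).
Local Notation biquad := (biquad a1 a2 a3 a5 a6 I).
Local Notation al := (qalpha a1 a2 a3 a5 a6 I).
Local Notation be := (qbeta a1 a2 a3 a5 a6 I).
Local Notation ga := (qgamma a3 I).

Lemma biquad_of_lprod y z w : vscale 2 (lprod y w) = mxapp L (lprod z z) -> biquad y z = 0.
Proof.
move=> yw; apply: (mulIf two_neq0); rewrite mul0r.
transitivity (vdot (Vec3 (- y.2 ^+ 2) (y.1 * y.2) (- y.1 ^+ 2)) (mxapp L (lprod z z))).
  by cbv [Lmx biquad]; unfold_forms; ring.
by rewrite -yw; unfold_forms; ring.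
Qed.

Lemma odd_step y z (Kn Ko : vec3 R) f g e :
  biquad y z = 0 ->
  Ko = mxapp (Lpoly g) (lprod y z) -> poly2 Ko != 0 ->
  fmul Kn Ko = fmul (mxapp (Lpoly e) (lprod z z)) (mxapp (Lpoly e) (lprod y y)) ->
  (forall G C, expand_prod f g G = expand_cross e (odd_gram al be ga G C)) ->
  Kn = mxapp (Lpoly f) (lprod y z).
Proof.
move=> biquad0 -> Ko_neq0 KnKo expand_fg; apply: (fmul_cancel Ko_neq0).
rewrite KnKo !mxapp_mcomb fmul_vcomb_cross fmul_vcomb.
have := Lcross_odd_gram biquad0; rewrite /Lcross => ->.
exact: esym (expand_fg _ _).
Qed.

Lemma even_step y z w (En Eo : vec3 R) f g e :
  vscale 2 (lprod z w) = mxapp L (lprod y y) ->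
  Eo = mxapp (Lpoly g) (lprod y y) -> poly2 Eo != 0 ->
  fmul En Eo = fmul (mxapp (Lpoly e) (lprod z z)) (mxapp (Lpoly e) (lprod w w)) ->
  (forall G D, wscale 8 (expand_prod f g G) = expand_sq e (even_gram al be ga G D)) ->
  En = mxapp (Lpoly f) (lprod y y).
Proof.
move=> zw -> Eo_neq0 EnEo expand_fg; apply: (fmul_cancel Eo_neq0).
have eight_neq0 : 8 != 0 :> R by rewrite (_ : 8 = 2 * 2 * 2) ?mulf_neq0 // -!natrM.
apply: (wscale_inj eight_neq0); rewrite EnEo {1}(_ : 8 = 4 * 2); last by rewrite -natrM.
rewrite -wscaleA Polar_lprod -Polar_vscale zw Polar_mcomb.
have := Lpolar_even_gram a1 a2 a3 a5 a6 I y; rewrite /Lpolar => ->.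
by rewrite -expand_fg !mxapp_mcomb fmul_vcomb.
Qed.

Section Sequence.
Variable x : nat -> R * R.
Hypothesis x_step : forall m,
  vscale 2 (lprod (x m.+2) (x m)) = mxapp L (lprod (x m.+1) (x m.+1)).
Hypothesis x_neq0 : forall n, x n != (0, 0).

Local Notation gap := (gap_coef al be ga).

Lemma x_lprod_neq0 i j : poly2 (vscale 2 (lprod (x i) (x j))) != 0.
Proof. exact: vscale_lprod_neq0. Qed.

Lemma biquad_succ c : biquad (x c) (x c.+1) = 0.
Proof. by apply: (biquad_of_lprod (w := x c.+2)); rewrite lprodC x_step. Qed.

Lemma lprod_gap3 c :
  vscale 2 (lprod (x c.+3) (x c)) = mxapp (Lpoly (gap 3)) (lprod (x c.+1) (x c.+2)).
Proof.
apply: (odd_step _ _ (x_lprod_neq0 c.+2 c.+1) _ (expand_gap3 _ _ _)).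
- exact: biquad_succ.
- by rewrite mxapp_Lpoly_gap1 lprodC.
- by rewrite !mxapp_Lpoly_gap2 fmul_vscale fmul_lprodAC -fmul_vscale !x_step.
Qed.

Lemma lprod_gap4 c :
  vscale 2 (lprod (x c.+4) (x c)) = mxapp (Lpoly (gap 4)) (lprod (x c.+2) (x c.+2)).
Proof.
apply: (even_step (x_step c.+1) _ (x_lprod_neq0 c.+2 c.+2) _ (expand_gap4 _ _ _)).
- by rewrite mxapp_Lpoly_gap0.
- by rewrite !mxapp_Lpoly_gap2 fmul_vscale fmul_lprodAC -fmul_vscale !x_step.
Qed.

Lemma lprod_gap5 c :
  vscale 2 (lprod (x c.+4.+1) (x c)) = mxapp (Lpoly (gap 5)) (lprod (x c.+2) (x c.+3)).
Proof.
apply: (odd_step _ (lprod_gap3 c.+1) (x_lprod_neq0 c.+4 c.+1) _ (expand_gap5 _ _ _)).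
- exact: biquad_succ.
- by rewrite fmul_vscale fmul_lprodAC -fmul_vscale (lprod_gap4 c.+1) lprod_gap4.
Qed.

Lemma lprod_gap6 c :
  vscale 2 (lprod (x c.+4.+2) (x c)) = mxapp (Lpoly (gap 6)) (lprod (x c.+3) (x c.+3)).
Proof.
apply: (even_step (x_step c.+2) _ (x_lprod_neq0 c.+4 c.+2) _ (expand_gap6 _ _ _)).
- by rewrite mxapp_Lpoly_gap2 x_step.
- by rewrite fmul_vscale fmul_lprodAC -fmul_vscale (lprod_gap4 c.+2) lprod_gap4.
Qed.

Lemma lprod_gap7 c :
  vscale 2 (lprod (x c.+4.+3) (x c)) = mxapp (Lpoly (gap 7)) (lprod (x c.+3) (x c.+4)).
Proof.
apply: (odd_step _ (lprod_gap5 c.+1) (x_lprod_neq0 c.+4.+2 c.+1) _ (expand_gap7 _ _ _)).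
- exact: biquad_succ.
- by rewrite fmul_vscale fmul_lprodAC -fmul_vscale (lprod_gap6 c.+1) lprod_gap6.
Qed.

Lemma lprod_somos7 n :
  lprod (x (n + 7)) (x n) =
  vcomb (Vec3 (somosA al be ga) (somosB al be ga) (somosC al be ga))
        (lprod (x (n + 6)) (x (n + 1))) (lprod (x (n + 5)) (x (n + 2)))
        (lprod (x (n + 4)) (x (n + 3))).
Proof.
apply: (vscale_inj two_neq0); rewrite vscale_vcomb !addnS !addn0.
rewrite lprod_gap7 lprod_gap5 lprod_gap3 (lprodC (x n.+4)).
by rewrite -(mxapp_Lpoly_gap1 a1 a2 a3 a5 a6 I al be ga) -mxapp_Lpoly_vcomb -gap_coef7_somos.
Qed.

End Sequence.
End Steps.

Section QRTMatrices.
Variables (R : numFieldType) (A B : 'M[R]_3).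
Hypotheses (symA : A^T = A) (symB : B^T = B).

Lemma sum_ord3 (F : 'I_3 -> R) : \sum_(k < 3) F k = F (inord 0) + F (inord 1) + F (inord 2).
Proof.
rewrite !big_ord_recl big_ord0 addr0 addrA.
by congr (F _ + F _ + F _); apply: val_inj; rewrite /= inordK.
Qed.

Lemma cmpVq0 (s t : R) : cmp (Vq s t) 0 = s ^+ 2.
Proof. by rewrite /cmp /Vq !mxE !inordK. Qed.
Lemma cmpVq1 (s t : R) : cmp (Vq s t) 1 = s * t.
Proof. by rewrite /cmp /Vq !mxE !inordK. Qed.
Lemma cmpVq2 (s t : R) : cmp (Vq s t) 2 = t ^+ 2.
Proof. by rewrite /cmp /Vq !mxE !inordK. Qed.

Lemma cmp_mulmx (M : 'M[R]_3) (v : 'cV[R]_3) i :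
  cmp (M *m v) i = ent M i 0 * cmp v 0 + ent M i 1 * cmp v 1 + ent M i 2 * cmp v 2.
Proof. by rewrite /cmp /ent mxE sum_ord3. Qed.

Lemma cmp_cross3_0 (u v : 'cV[R]_3) : cmp (cross3 u v) 0 = cmp u 1 * cmp v 2 - cmp u 2 * cmp v 1.
Proof. by rewrite {1}/cmp /cross3 !mxE !inordK. Qed.
Lemma cmp_cross3_1 (u v : 'cV[R]_3) : cmp (cross3 u v) 1 = cmp u 2 * cmp v 0 - cmp u 0 * cmp v 2.
Proof. by rewrite {1}/cmp /cross3 !mxE !inordK. Qed.
Lemma cmp_cross3_2 (u v : 'cV[R]_3) : cmp (cross3 u v) 2 = cmp u 0 * cmp v 1 - cmp u 1 * cmp v 0.
Proof. by rewrite {1}/cmp /cross3 !mxE !inordK. Qed.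

Lemma bform_expand (M : 'M[R]_3) u v : bform M u v =
    cmp u 0 * ent M 0 0 * cmp v 0 + cmp u 1 * ent M 1 0 * cmp v 0 + cmp u 2 * ent M 2 0 * cmp v 0
  + (cmp u 0 * ent M 0 1 * cmp v 1 + cmp u 1 * ent M 1 1 * cmp v 1 + cmp u 2 * ent M 2 1 * cmp v 1)
  + (cmp u 0 * ent M 0 2 * cmp v 2 + cmp u 1 * ent M 1 2 * cmp v 2 + cmp u 2 * ent M 2 2 * cmp v 2).
Proof.
have -> : bform M u v = \sum_(k < 3) \sum_(j < 3) u j 0 * M j k * v k 0.
  rewrite /bform mxE; apply: eq_bigr => k _; rewrite mxE big_distrl /=.
  by apply: eq_bigr => j _; rewrite mxE.
by rewrite !sum_ord3.
Qed.

Lemma ent_sym (M : 'M[R]_3) i j : M^T = M -> ent M i j = ent M j i.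
Proof. by move=> symM; rewrite /ent -{1}symM mxE. Qed.

Ltac expand := rewrite /Fvec ?cmp_cross3_0 ?cmp_cross3_1 ?cmp_cross3_2 ?cmp_mulmx
  ?bform_expand ?cmpVq0 ?cmpVq1 ?cmpVq2
  ?(ent_sym 1 0 symA) ?(ent_sym 2 0 symA) ?(ent_sym 2 1 symA)
  ?(ent_sym 1 0 symB) ?(ent_sym 2 0 symB) ?(ent_sym 2 1 symB).

Local Notation LJ J := (Lmx (a1 A B J) (a2 A B J) (a3 A B J) (a5 A B J) (a6 A B J) (Ic A B J)).

Lemma biquad_bform J (y z : R * R) :
  biquad (a1 A B J) (a2 A B J) (a3 A B J) (a5 A B J) (a6 A B J) (Ic A B J) y z =
  bform A (Vq y.1 y.2) (Vq z.1 z.2) - J * bform B (Vq y.1 y.2) (Vq z.1 z.2).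
Proof. rewrite /biquad /a1 /a2 /a3 /a5 /a6 /Ic; expand; ring. Qed.

Definition qrt_next (pm qm p0 q0 : R) : R * R :=
  let F := Fvec A B p0 q0 in let D := Dn B pm qm p0 q0 in
  ((qm * cmp F 0 - pm * cmp F 1) / D, (qm * cmp F 1 - pm * cmp F 2) / D).

Lemma qrt_next_lprod pm qm p0 q0 : Dn B pm qm p0 q0 != 0 ->
  vscale 2 (lprod (qrt_next pm qm p0 q0) (pm, qm)) =
  mxapp (LJ (Jval A B pm qm p0 q0)) (lprod (p0, q0) (p0, q0)).
Proof.
cbv [qrt_next Jval Dn a1 a2 a3 a5 a6 Ic] => D_neq0.
by apply: vec3_ext; unfold_forms; cbv [Lmx fst snd]; expand; move: D_neq0; expand => D_neq0; field.
Qed.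

Lemma Jval_step J pm qm p0 q0 pp qp :
  vscale 2 (lprod (pp, qp) (pm, qm)) = mxapp (LJ J) (lprod (p0, q0) (p0, q0)) ->
  Dn B p0 q0 pp qp != 0 -> Jval A B p0 q0 pp qp = J.
Proof.
move=> step D_neq0; have two_neq0 : 2 != 0 :> R by rewrite pnatr_eq0.
move: (biquad_of_lprod two_neq0 step); rewrite biquadC biquad_bform.
by move/eqP; rewrite subr_eq0 => /eqP; rewrite /Jval => ->; rewrite mulfK.
Qed.

Lemma Dn0 (p q : R) : Dn B 0 0 p q = 0.
Proof. by rewrite /Dn bform_expand !(cmpVq0, cmpVq1, cmpVq2); ring. Qed.

End QRTMatrices.

Theorem corollary3 (R : numFieldType) (A B : 'M[R]_3)
  (symA : A^T = A) (symB : B^T = B) (p q : nat -> R)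
  (hD : forall n, (1 <= n)%N -> Dn B (p n.-1) (q n.-1) (p n) (q n) != 0)
  (hp : forall n, (1 <= n)%N ->
     p n.+1 = (q n.-1 * cmp (Fvec A B (p n) (q n)) 0
               - p n.-1 * cmp (Fvec A B (p n) (q n)) 1)
              / Dn B (p n.-1) (q n.-1) (p n) (q n))
  (hq : forall n, (1 <= n)%N ->
     q n.+1 = (q n.-1 * cmp (Fvec A B (p n) (q n)) 1
               - p n.-1 * cmp (Fvec A B (p n) (q n)) 2)
              / Dn B (p n.-1) (q n.-1) (p n) (q n)) :
  let J := Jval A B (p 0%N) (q 0%N) (p 1%N) (q 1%N) in
  somos7 (Acoef A B J) (Bcoef A B J) (Ccoef A B J) p /\
  somos7 (Acoef A B J) (Bcoef A B J) (Ccoef A B J) q.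
Proof.
move=> J; pose L J := Lmx (a1 A B J) (a2 A B J) (a3 A B J) (a5 A B J) (a6 A B J) (Ic A B J).
have two_neq0 : 2 != 0 :> R by rewrite pnatr_eq0.
have D_neq0 n : Dn B (p n) (q n) (p n.+1) (q n.+1) != 0 by exact: hD n.+1 _.
have next n : (p n.+2, q n.+2) = qrt_next A B (p n) (q n) (p n.+1) (q n.+1).
  by rewrite (hp n.+1) ?(hq n.+1).
have step_J n : vscale 2 (lprod (p n.+2, q n.+2) (p n, q n)) =
    mxapp (L (Jval A B (p n) (q n) (p n.+1) (q n.+1))) (lprod (p n.+1, q n.+1) (p n.+1, q n.+1)).
  by rewrite next; apply: qrt_next_lprod.
have J_inv n : Jval A B (p n) (q n) (p n.+1) (q n.+1) = J.
  by elim: n => [//|n IH]; rewrite -IH; apply: Jval_step (step_J n) (D_neq0 n.+1).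
have step n : vscale 2 (lprod (p n.+2, q n.+2) (p n, q n)) =
    mxapp (L J) (lprod (p n.+1, q n.+1) (p n.+1, q n.+1)).
  by rewrite step_J J_inv.
have x_neq0 n : (p n, q n) != (0, 0).
  by apply: contraNneq (D_neq0 n) => -[-> ->]; rewrite Dn0 eqxx.
have somos := lprod_somos7 two_neq0 step x_neq0.
by split=> n; [move: (congr1 (@v0 _) (somos n)) | move: (congr1 (@v2 _) (somos n))] => /= ->;
  rewrite !mulrA.
Qed.
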